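(* Let $X$ be a complex Banach space with a Schauder decomposition $\mathcal{D}=\{X_n:n\ge1\}$, let $K=\sup_{N\ge1}\|P_N\|$ and $Q_N=I_X-P_N$. Let $(a_n)_{n\ge1}$ be a nondecreasing sequence in $(0,\infty)$ with $\lim_na_n=\infty$, and let $A^{-1}\in B(X)$ be given by $A^{-1}x=\sum_{n\ge1}a_n^{-1}p_n(x)$. Then for every $t>0$ and $N\ge1$, $$\|e^{-tA^{-1}}-Q_N\|\le2(1+K)\big(e^{-t/a_N}+1-e^{-t/a_{N+1}}\big).$$ In particular, for $a_n=(n!)^3$ and $t_N=N(N!)^3$ one has $\sum_{N\ge1}\|e^{-t_NA^{-1}}-Q_N\|<\infty$.
   Context: A Schauder decomposition of $X$ is a sequence $\mathcal{D}=\{X_n:n\ge1\}$ of closed subspaces such that every $x\in X$ has a unique expansion $x=\sum_nx_n$ with $x_n\in X_n$; $p_n(x)=x_n$ and $P_N=\sum_{n=1}^Np_n$; the set $\{P_N\}$ is bounded. Here $A^{-1}$ is the inverse of the sectorial operator $Ax=\sum_na_np_n(x)$, $D(A)=\{x:\sum_na_np_n(x)\text{ converges}\}$, and $e^{-tA^{-1}}$ is the exponential of the bounded operator $-tA^{-1}$ (equal to $x\mapsto\sum_ne^{-t/a_n}p_n(x)$). *)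

From Stdlib Require Import Reals Lra Classical ClassicalEpsilon Factorial.
Open Scope R_scope.

(** A complex Banach space, presented as a real vector space equipped with a
    real-linear map [cJ] ("multiplication by i") with [cJ (cJ x) = - x], so that
    complex scalar multiplication is (a + i b) x := a x + b (cJ x); the norm is
    homogeneous for complex scalars, and the space is complete. *)
Record CBanach := {
  cb_car :> Type;
  cb_zero : cb_car;
  cb_add : cb_car -> cb_car -> cb_car;
  cb_opp : cb_car -> cb_car;
  cb_scal : R -> cb_car -> cb_car;
  cb_J : cb_car -> cb_car;
  cb_norm : cb_car -> R;
  cb_add_assoc : forall x y z, cb_add x (cb_add y z) = cb_add (cb_add x y) z;
  cb_add_comm : forall x y, cb_add x y = cb_add y x;
  cb_add_0 : forall x, cb_add x cb_zero = x;
  cb_add_opp : forall x, cb_add x (cb_opp x) = cb_zero;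
  cb_scal_assoc : forall a b x, cb_scal a (cb_scal b x) = cb_scal (a * b) x;
  cb_scal_1 : forall x, cb_scal 1 x = x;
  cb_scal_distr_l : forall a x y, cb_scal a (cb_add x y) = cb_add (cb_scal a x) (cb_scal a y);
  cb_scal_distr_r : forall a b x, cb_scal (a + b) x = cb_add (cb_scal a x) (cb_scal b x);
  cb_J_add : forall x y, cb_J (cb_add x y) = cb_add (cb_J x) (cb_J y);
  cb_J_scal : forall a x, cb_J (cb_scal a x) = cb_scal a (cb_J x);
  cb_J_J : forall x, cb_J (cb_J x) = cb_opp x;
  cb_norm_eq0 : forall x, cb_norm x = 0 -> x = cb_zero;
  cb_norm_triangle : forall x y, cb_norm (cb_add x y) <= cb_norm x + cb_norm y;
  cb_norm_cscal : forall a b x,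
    cb_norm (cb_add (cb_scal a x) (cb_scal b (cb_J x))) = sqrt (a ^ 2 + b ^ 2) * cb_norm x;
  cb_complete : forall u : nat -> cb_car,
    (forall eps, 0 < eps -> exists M, forall m n, (M <= m)%nat -> (M <= n)%nat ->
        cb_norm (cb_add (u m) (cb_opp (u n))) < eps) ->
    exists l, forall eps, 0 < eps -> exists M, forall n, (M <= n)%nat ->
        cb_norm (cb_add (u n) (cb_opp l)) < eps
}.

Arguments cb_zero {c}.
Arguments cb_add {c}.
Arguments cb_opp {c}.
Arguments cb_scal {c}.
Arguments cb_J {c}.
Arguments cb_norm {c}.

Section Defs.
Variable X : CBanach.

Definition vsub (x y : X) : X := cb_add x (cb_opp y).

Definition seq_conv (u : nat -> X) (l : X) : Prop :=
  forall eps, 0 < eps -> exists M, forall n, (M <= n)%nat -> cb_norm (vsub (u n) l) < eps.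

(** [vsum u m N] = u m + u (m+1) + ... + u N  (zero if N < m). *)
Fixpoint vsum (u : nat -> X) (m N : nat) : X :=
  match N with
  | O => if Nat.eqb m 0 then u O else cb_zero
  | S N' => cb_add (vsum u m N') (if Nat.leb m (S N') then u (S N') else cb_zero)
  end.

Definition series_conv (m : nat) (u : nat -> X) (l : X) : Prop :=
  seq_conv (fun N => vsum u m N) l.

(** Limit of a sequence (0 if it does not converge). *)
Definition vlim (u : nat -> X) : X :=
  epsilon (inhabits cb_zero) (fun l => seq_conv u l).

Definition series_sum (m : nat) (u : nat -> X) : X := vlim (fun N => vsum u m N).

Definition closed_subspace (S : X -> Prop) : Prop :=
  S cb_zero /\
  (forall x y, S x -> S y -> S (cb_add x y)) /\
  (forall a x, S x -> S (cb_scal a x)) /\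
  (forall x, S x -> S (cb_J x)) /\
  (forall u l, (forall n, S (u n)) -> seq_conv u l -> S l).

Definition Pn (p : nat -> X -> X) (N : nat) (x : X) : X := vsum (fun n => p n x) 1 N.

Definition Qn (p : nat -> X -> X) (N : nat) (x : X) : X := vsub x (Pn p N x).

Definition schauder_decomposition (Xs : nat -> X -> Prop) (p : nat -> X -> X) : Prop :=
  (forall n, (1 <= n)%nat -> closed_subspace (Xs n)) /\
  (forall x n, (1 <= n)%nat -> Xs n (p n x)) /\
  (forall x, series_conv 1 (fun n => p n x) x) /\
  (forall x (y : nat -> X), (forall n, (1 <= n)%nat -> Xs n (y n)) ->
      series_conv 1 y x -> forall n, (1 <= n)%nat -> y n = p n x) /\
  (exists M, forall N x, (1 <= N)%nat -> cb_norm (Pn p N x) <= M * cb_norm x).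

(** Supremum of a set of reals (0 if no least upper bound exists). *)
Definition Rsup (S : R -> Prop) : R := epsilon (inhabits 0) (fun r => is_lub S r).

Definition opnorm (T : X -> X) : R :=
  Rsup (fun y => exists x, cb_norm x <= 1 /\ y = cb_norm (T x)).

Definition Kconst (p : nat -> X -> X) : R :=
  Rsup (fun y => exists N, (1 <= N)%nat /\ y = opnorm (Pn p N)).

Definition Ainv (a : nat -> R) (p : nat -> X -> X) (x : X) : X :=
  series_sum 1 (fun n => cb_scal (/ a n) (p n x)).

Definition opexp (T : X -> X) (x : X) : X :=
  series_sum 0 (fun k => cb_scal (/ INR (fact k)) (Nat.iter k T x)).

Definition semigroup_Ainv (a : nat -> R) (p : nat -> X -> X) (t : R) : X -> X :=
  opexp (fun x => cb_scal (- t) (Ainv a p x)).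

End Defs.

Arguments vsub {X}.
Arguments Pn {X}.
Arguments Qn {X}.
Arguments opnorm {X}.
Arguments Kconst {X}.
Arguments Ainv {X}.
Arguments semigroup_Ainv {X}.
Arguments schauder_decomposition {X}.

From Stdlib Require Import Reals Lra Lia Arith Factorial ClassicalEpsilon.
Open Scope R_scope.

(** Write [q_i = p_(i+1) x], so that [x = sum_i q_i]. By uniqueness of the
    expansion, [(-t A^-1)^k x = sum_i (-t/a_(i+1))^k q_i]; summing the exponential
    series, with the truncation error controlled uniformly along the increasing
    nonpositive sequence [-t/a_(i+1)], gives [e^(-t A^-1) x = sum_i e^(-t/a_(i+1)) q_i].
    Hence [e^(-t A^-1) x - Q_N x = sum_i g_i q_i] with
    [g_i = e^(-t/a_(i+1)) - 1 + [i < N]]. Abel summation against the tails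
    [x - P_i x], of norm at most [(1 + K) |x|], bounds each partial sum
    [sum_(i<M) g_i q_i] by [(1 + K) |x|] times [|g_0| + |g_M| + variation of g on
    [0, M]]; for this monotone sequence with a single jump that factor is at most
    [2 e^(-t/a_N) + 2 (1 - e^(-t/a_(N+1)))].
    For [a_n = (n!)^3] and [t_N = N (N!)^3] this is at most
    [2 (1 + K) (2^-N + 1/(N (N+1)))], a summable bound. *)

Arguments cb_add_assoc {c}. Arguments cb_add_comm {c}. Arguments cb_add_0 {c}.
Arguments cb_add_opp {c}. Arguments cb_scal_assoc {c}. Arguments cb_scal_1 {c}.
Arguments cb_scal_distr_l {c}. Arguments cb_scal_distr_r {c}.
Arguments cb_norm_triangle {c}. Arguments cb_norm_cscal {c}. Arguments cb_norm_eq0 {c}.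

Section VectorAlgebra.
Variable X : CBanach.
Implicit Types x y z w : X.

Notation add := (@cb_add X).
Notation opp := (@cb_opp X).
Notation scal := (@cb_scal X).
Notation nrm := (@cb_norm X).
Notation zero := (@cb_zero X).

Lemma cb_add_0_l x : add zero x = x.
Proof. rewrite cb_add_comm; apply cb_add_0. Qed.

Lemma cb_add_opp_l x : add (opp x) x = zero.
Proof. rewrite cb_add_comm; apply cb_add_opp. Qed.

Lemma cb_addKl x y z : add x y = add x z -> y = z.
Proof.
  intro H. rewrite <- (cb_add_0_l y), <- (cb_add_0_l z), <- (cb_add_opp_l x).
  rewrite <- !cb_add_assoc, H. reflexivity.
Qed.

Lemma cb_opp_unique x y : add x y = zero -> y = opp x.
Proof. intro H. apply (cb_addKl x). rewrite H, cb_add_opp. reflexivity. Qed.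

Lemma cb_scal_0_l x : scal 0 x = zero.
Proof.
  apply (cb_addKl (scal 0 x)). rewrite cb_add_0, <- cb_scal_distr_r.
  f_equal; ring.
Qed.

Lemma cb_scal_0_r a : scal a zero = zero.
Proof. rewrite <- (cb_scal_0_l zero), cb_scal_assoc, Rmult_0_r. reflexivity. Qed.

Lemma cb_scal_N1 x : scal (-1) x = opp x.
Proof.
  apply cb_opp_unique. rewrite <- (cb_scal_1 x) at 1. rewrite <- cb_scal_distr_r.
  replace (1 + -1) with 0 by ring. apply cb_scal_0_l.
Qed.

Lemma cb_scal_opp_l a x : scal (- a) x = opp (scal a x).
Proof. rewrite <- cb_scal_N1, cb_scal_assoc. f_equal; ring. Qed.

Lemma cb_scal_opp_r a x : scal a (opp x) = opp (scal a x).
Proof. rewrite <- !cb_scal_N1, !cb_scal_assoc. f_equal; ring. Qed.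

Lemma cb_opp_opp x : opp (opp x) = x.
Proof.
  rewrite <- !cb_scal_N1, cb_scal_assoc. replace (-1 * -1) with 1 by ring.
  apply cb_scal_1.
Qed.

Lemma cb_opp_add x y : opp (add x y) = add (opp x) (opp y).
Proof. rewrite <- !cb_scal_N1. apply cb_scal_distr_l. Qed.

Lemma cb_opp_0 : opp zero = zero.
Proof. rewrite <- cb_scal_N1. apply cb_scal_0_r. Qed.

Lemma cb_add_AC x y z : add (add x y) z = add (add x z) y.
Proof. rewrite <- !cb_add_assoc, (cb_add_comm y). reflexivity. Qed.

Lemma cb_add_ACA x y z w : add (add x y) (add z w) = add (add x z) (add y w).
Proof. rewrite !cb_add_assoc, (cb_add_AC x y z). reflexivity. Qed.

Lemma vsub_diag x : vsub x x = zero.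
Proof. apply cb_add_opp. Qed.

Lemma vsub_add x y z w : vsub (add x y) (add z w) = add (vsub x z) (vsub y w).
Proof. unfold vsub. rewrite cb_opp_add, cb_add_ACA. reflexivity. Qed.

Lemma vsub_0_r x : vsub x zero = x.
Proof. unfold vsub. rewrite cb_opp_0. apply cb_add_0. Qed.

Lemma vsub_addK x y : add (vsub x y) y = x.
Proof. unfold vsub. rewrite <- cb_add_assoc, cb_add_opp_l. apply cb_add_0. Qed.

Lemma add_vsubK x y : vsub (add x y) y = x.
Proof. unfold vsub. rewrite <- cb_add_assoc, cb_add_opp. apply cb_add_0. Qed.

Lemma vsub_vsub x y z : vsub x (vsub y z) = add (vsub x y) z.
Proof. unfold vsub. rewrite cb_opp_add, cb_opp_opp, cb_add_assoc. reflexivity. Qed.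

Lemma vsub_eq x y z : x = add z y -> vsub x y = z.
Proof. intros ->. apply add_vsubK. Qed.

Lemma vsub_vsub_cancel x y z : vsub (vsub x y) (vsub x (add y z)) = z.
Proof.
  rewrite vsub_vsub. unfold vsub.
  rewrite (cb_add_AC x (opp y) (opp x)), cb_add_opp, cb_add_0_l, cb_add_assoc,
    cb_add_opp_l, cb_add_0_l.
  reflexivity.
Qed.

Lemma cb_scal_vsub a x y : scal a (vsub x y) = vsub (scal a x) (scal a y).
Proof. unfold vsub. rewrite cb_scal_distr_l, cb_scal_opp_r. reflexivity. Qed.

Lemma cb_scal_minus a b x : scal (a - b) x = vsub (scal a x) (scal b x).
Proof. unfold vsub, Rminus. rewrite cb_scal_distr_r, cb_scal_opp_l. reflexivity. Qed.

Lemma vsub_opp x y : vsub x y = opp (vsub y x).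
Proof. unfold vsub. rewrite cb_opp_add, cb_opp_opp, cb_add_comm. reflexivity. Qed.

Lemma norm_scal a x : nrm (scal a x) = Rabs a * nrm x.
Proof.
  pose proof (cb_norm_cscal a 0 x) as H. rewrite cb_scal_0_l, cb_add_0 in H.
  rewrite H. f_equal. rewrite <- sqrt_Rsqr_abs. f_equal. unfold Rsqr. ring.
Qed.

Lemma norm_0 : nrm zero = 0.
Proof. rewrite <- (cb_scal_0_l zero), norm_scal, Rabs_R0. ring. Qed.

Lemma norm_opp x : nrm (opp x) = nrm x.
Proof.
  rewrite <- cb_scal_N1, norm_scal, Rabs_left by lra. ring.
Qed.

Lemma norm_ge0 x : 0 <= nrm x.
Proof.
  pose proof (cb_norm_triangle x (opp x)) as H.
  rewrite cb_add_opp, norm_0, norm_opp in H. lra.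
Qed.

Lemma norm_vsubC x y : nrm (vsub x y) = nrm (vsub y x).
Proof. rewrite vsub_opp, norm_opp. reflexivity. Qed.

Lemma norm_vsub_le x y : nrm (vsub x y) <= nrm x + nrm y.
Proof. unfold vsub. rewrite <- (norm_opp y). apply cb_norm_triangle. Qed.

Lemma norm_vsub_triangle x y z : nrm (vsub x z) <= nrm (vsub x y) + nrm (vsub y z).
Proof.
  replace (vsub x z) with (add (vsub x y) (vsub y z)) by
    (unfold vsub; rewrite <- cb_add_assoc, (cb_add_assoc (opp y) y), cb_add_opp_l,
       cb_add_0_l; reflexivity).
  apply cb_norm_triangle.
Qed.

End VectorAlgebra.

Fixpoint rsum (f : nat -> R) (n : nat) : R :=
  match n with O => 0 | S n => rsum f n + f n end.

Lemma rsum_sum_f_R0 f K : rsum f (S K) = sum_f_R0 f K.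
Proof. induction K as [|K IH]; simpl in *. ring. rewrite <- IH. reflexivity. Qed.

Lemma rsum_le f g n : (forall i, (i < n)%nat -> f i <= g i) -> rsum f n <= rsum g n.
Proof. induction n; intro H; simpl. lra. apply Rplus_le_compat; auto. Qed.

Lemma rsum_telescope F n : rsum (fun j => F j - F (S j)) n = F O - F n.
Proof. induction n as [|n IH]; simpl. ring. rewrite IH. ring. Qed.

Lemma rsum_scal c f n : rsum (fun i => c * f i) n = c * rsum f n.
Proof. induction n as [|n IH]; simpl. ring. rewrite IH. ring. Qed.

Lemma nondecreasing_le (g : nat -> R) :
  (forall i, g i <= g (S i)) -> forall i j, (i <= j)%nat -> g i <= g j.
Proof. intros H i j Hij. induction Hij as [|m _ IH]. lra. specialize (H m). lra. Qed.

Lemma nonincreasing_le (g : nat -> R) :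
  (forall i, g (S i) <= g i) -> forall i j, (i <= j)%nat -> g j <= g i.
Proof. intros H i j Hij. induction Hij as [|m _ IH]. lra. specialize (H m). lra. Qed.

Definition variation (g : nat -> R) (m k : nat) : R :=
  rsum (fun j => Rabs (g (S (m + j)) - g (m + j)%nat)) k.

Lemma variation_nonincreasing (g : nat -> R) : (forall i, g (S i) <= g i) ->
  forall m k, variation g m k = g m - g (m + k)%nat.
Proof.
  intros H m k; induction k as [|k IH]; unfold variation in *; simpl.
  - rewrite Nat.add_0_r; ring.
  - rewrite IH, Rabs_left1 by (specialize (H (m + k)%nat); lra).
    rewrite Nat.add_succ_r. ring.
Qed.

Lemma variation_split g m k1 k2 :
  variation g m (k1 + k2) = variation g m k1 + variation g (m + k1) k2.
Proof.
  induction k2 as [|k2 IH]; unfold variation in *; simpl.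
  - rewrite Nat.add_0_r. ring.
  - rewrite Nat.add_succ_r. simpl. rewrite IH, !Nat.add_assoc. ring.
Qed.

Lemma variation_nondecreasing_on (g : nat -> R) m k :
  (forall j, (j < k)%nat -> g (m + j)%nat <= g (S (m + j))) ->
  variation g m k = g (m + k)%nat - g m.
Proof.
  induction k as [|k IH]; intro H; unfold variation in *; simpl.
  - rewrite Nat.add_0_r; ring.
  - rewrite IH, Rabs_right by (auto || (specialize (H k ltac:(lia)); lra)).
    rewrite Nat.add_succ_r. ring.
Qed.

Section FiniteSums.
Variable X : CBanach.
Notation add := (@cb_add X).
Notation scal := (@cb_scal X).
Notation nrm := (@cb_norm X).
Notation zero := (@cb_zero X).

Fixpoint psum (u : nat -> X) (n : nat) : X :=
  match n with O => zero | S n => add (psum u n) (u n) end.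

Lemma vsum1_psum u N : vsum X u 1 N = psum (fun i => u (S i)) N.
Proof. induction N as [|N IH]; simpl. reflexivity. rewrite IH. reflexivity. Qed.

Lemma vsum0_psum u K : vsum X u 0 K = psum u (S K).
Proof.
  induction K as [|K IH]; simpl. rewrite cb_add_0_l. reflexivity. rewrite IH. reflexivity.
Qed.

Lemma eq_psum u v n : (forall i, (i < n)%nat -> u i = v i) -> psum u n = psum v n.
Proof. induction n as [|n IH]; intro H; simpl. reflexivity. rewrite IH, H; auto. Qed.

Lemma psum_add u v n : psum (fun i => add (u i) (v i)) n = add (psum u n) (psum v n).
Proof.
  induction n as [|n IH]; simpl. rewrite cb_add_0. reflexivity.
  rewrite IH. apply cb_add_ACA.
Qed.

Lemma psum_scal c u n : psum (fun i => scal c (u i)) n = scal c (psum u n).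
Proof.
  induction n as [|n IH]; simpl. rewrite cb_scal_0_r. reflexivity.
  rewrite IH, cb_scal_distr_l. reflexivity.
Qed.

Lemma psum_vsub u v n : psum (fun i => vsub (u i) (v i)) n = vsub (psum u n) (psum v n).
Proof.
  induction n as [|n IH]; simpl. rewrite vsub_0_r. reflexivity.
  rewrite IH, vsub_add. reflexivity.
Qed.

Lemma psum_split u m k : psum u (m + k) = add (psum u m) (psum (fun j => u (m + j)%nat) k).
Proof.
  induction k as [|k IH]; simpl. rewrite Nat.add_0_r, cb_add_0. reflexivity.
  rewrite Nat.add_succ_r. simpl. rewrite IH, cb_add_assoc. reflexivity.
Qed.

Lemma norm_psum_le u n : nrm (psum u n) <= rsum (fun i => nrm (u i)) n.
Proof.
  induction n as [|n IH]; simpl. rewrite norm_0. lra.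
  eapply Rle_trans. apply cb_norm_triangle. lra.
Qed.

Lemma exchange_psum (q : nat -> X) (c : nat -> nat -> R) K N :
  psum (fun k => psum (fun i => scal (c k i) (q i)) N) K =
  psum (fun i => scal (rsum (fun k => c k i) K) (q i)) N.
Proof.
  induction K as [|K IH]; simpl.
  - symmetry. induction N as [|N IHN]; simpl. reflexivity.
    rewrite IHN, cb_scal_0_l, cb_add_0. reflexivity.
  - rewrite IH, <- psum_add. apply eq_psum. intros i _. rewrite cb_scal_distr_r. reflexivity.
Qed.

Lemma psum_scal_minus (q : nat -> X) (f g : nat -> R) N :
  psum (fun i => scal (f i - g i) (q i)) N =
  vsub (psum (fun i => scal (f i) (q i)) N) (psum (fun i => scal (g i) (q i)) N).
Proof. rewrite <- psum_vsub. apply eq_psum. intros; apply cb_scal_minus. Qed.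

Lemma psum_scal_plus (q : nat -> X) (f g : nat -> R) N :
  psum (fun i => scal (f i + g i) (q i)) N =
  add (psum (fun i => scal (f i) (q i)) N) (psum (fun i => scal (g i) (q i)) N).
Proof. rewrite <- psum_add. apply eq_psum. intros; apply cb_scal_distr_r. Qed.

Lemma psum_scal_mult (q : nat -> X) c (f : nat -> R) N :
  psum (fun i => scal (c * f i) (q i)) N = scal c (psum (fun i => scal (f i) (q i)) N).
Proof. rewrite <- psum_scal. apply eq_psum. intros; rewrite cb_scal_assoc. reflexivity. Qed.

End FiniteSums.

Section Limits.
Variable X : CBanach.
Notation add := (@cb_add X).
Notation opp := (@cb_opp X).
Notation scal := (@cb_scal X).
Notation nrm := (@cb_norm X).
Notation zero := (@cb_zero X).

Lemma seq_conv_unique u l1 l2 : seq_conv X u l1 -> seq_conv X u l2 -> l1 = l2.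
Proof.
  intros H1 H2.
  assert (E : nrm (vsub l1 l2) = 0).
  { apply Rle_antisym; [|apply norm_ge0]. apply Rnot_lt_le. intro Hp.
    destruct (H1 (nrm (vsub l1 l2) / 2)) as [M1 HM1]. lra.
    destruct (H2 (nrm (vsub l1 l2) / 2)) as [M2 HM2]. lra.
    specialize (HM1 (Nat.max M1 M2) ltac:(lia)). specialize (HM2 (Nat.max M1 M2) ltac:(lia)).
    pose proof (norm_vsub_triangle _ l1 (u (Nat.max M1 M2)) l2).
    rewrite norm_vsubC in HM1. lra. }
  apply cb_norm_eq0 in E. rewrite <- (vsub_addK _ l1 l2), E, cb_add_0_l. reflexivity.
Qed.

Lemma vlim_eq u l : seq_conv X u l -> vlim X u = l.
Proof.
  intro H. apply (seq_conv_unique u); [|exact H].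
  unfold vlim. apply epsilon_spec. exists l; exact H.
Qed.

Lemma seq_conv_ext u v l : (forall n, u n = v n) -> seq_conv X u l -> seq_conv X v l.
Proof.
  intros E H e He. destruct (H e He) as [M HM]. exists M. intros n Hn. rewrite <- E. auto.
Qed.

Lemma seq_conv_eventually_ext u v l :
  (exists N0, forall n, (N0 <= n)%nat -> u n = v n) -> seq_conv X u l -> seq_conv X v l.
Proof.
  intros [N0 E] H e He. destruct (H e He) as [M HM]. exists (Nat.max M N0). intros n Hn.
  rewrite <- E by lia. apply HM; lia.
Qed.

Lemma seq_conv_const l : seq_conv X (fun _ => l) l.
Proof. intros e He. exists O. intros. rewrite vsub_diag, norm_0. lra. Qed.

Lemma seq_conv_add u v l1 l2 : seq_conv X u l1 -> seq_conv X v l2 ->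
  seq_conv X (fun n => add (u n) (v n)) (add l1 l2).
Proof.
  intros H1 H2 e He.
  destruct (H1 (e/2)) as [M1 HM1]. lra. destruct (H2 (e/2)) as [M2 HM2]. lra.
  exists (Nat.max M1 M2). intros n Hn. rewrite vsub_add.
  eapply Rle_lt_trans. apply cb_norm_triangle.
  specialize (HM1 n ltac:(lia)). specialize (HM2 n ltac:(lia)). lra.
Qed.

Lemma seq_conv_scal c u l : seq_conv X u l -> seq_conv X (fun n => scal c (u n)) (scal c l).
Proof.
  intros H e He. pose proof (Rabs_pos c) as Hc.
  destruct (H (e / (Rabs c + 1))) as [M HM]. apply Rdiv_lt_0_compat; lra.
  exists M. intros n Hn. rewrite <- cb_scal_vsub, norm_scal.
  specialize (HM n Hn). pose proof (norm_ge0 _ (vsub (u n) l)).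
  apply Rle_lt_trans with ((Rabs c + 1) * nrm (vsub (u n) l)). nra.
  apply Rmult_lt_compat_l with (r := Rabs c + 1) in HM. 2: lra.
  replace ((Rabs c + 1) * (e / (Rabs c + 1))) with e in HM by (field; lra). exact HM.
Qed.

Lemma seq_conv_vsub u v l1 l2 : seq_conv X u l1 -> seq_conv X v l2 ->
  seq_conv X (fun n => vsub (u n) (v n)) (vsub l1 l2).
Proof.
  intros H1 H2. apply seq_conv_add; auto. rewrite <- cb_scal_N1.
  apply seq_conv_ext with (fun n => scal (-1) (v n)). intro; apply cb_scal_N1.
  apply seq_conv_scal; auto.
Qed.

Lemma seq_conv_of_norm_le_cv0 u l (r : nat -> R) :
  (forall n, nrm (vsub (u n) l) <= r n) -> Un_cv r 0 -> seq_conv X u l.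
Proof.
  intros Hr Hcv e He. destruct (Hcv e He) as [M HM]. exists M. intros n Hn.
  specialize (HM n Hn). unfold Rdist in HM. rewrite Rminus_0_r in HM.
  pose proof (Rle_abs (r n)). specialize (Hr n). lra.
Qed.

Lemma seq_conv_psum (s : nat -> nat -> X) (l : nat -> X) K :
  (forall k, seq_conv X (s k) (l k)) ->
  seq_conv X (fun N => psum X (fun k => s k N) K) (psum X l K).
Proof. intro H. induction K; simpl. apply seq_conv_const. apply seq_conv_add; auto. Qed.

Lemma norm_lim_le s l b : seq_conv X s l -> (forall N, nrm (s N) <= b) -> nrm l <= b.
Proof.
  intros H Hb. apply Rnot_lt_le. intro Hl. destruct (H (nrm l - b)) as [M HM]. lra.
  specialize (HM M (le_n _)). specialize (Hb M).
  pose proof (norm_vsub_triangle _ l (s M) zero) as T.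
  rewrite !vsub_0_r, (norm_vsubC _ l) in T. lra.
Qed.

Lemma cauchy_seq_conv s :
  (forall e, 0 < e -> exists M0, forall m M, (M0 <= m)%nat -> (m <= M)%nat ->
     nrm (vsub (s M) (s m)) < e) ->
  exists l, seq_conv X s l.
Proof.
  intro H. apply cb_complete. intros e He. destruct (H e He) as [M0 HM]. exists M0.
  intros m n Hm Hn. change (nrm (vsub (s m) (s n)) < e).
  destruct (Nat.le_ge_cases m n). rewrite norm_vsubC. apply HM; auto. apply HM; auto.
Qed.

End Limits.

Section AbelSummation.
Variable X : CBanach.
Notation add := (@cb_add X).
Notation scal := (@cb_scal X).
Notation nrm := (@cb_norm X).

Lemma vsub_add_rearrange (a b c d e : X) :
  add (add (vsub (add a b) c) (vsub c d)) e = add a (add b (vsub e d)).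
Proof.
  unfold vsub.
  rewrite <- (cb_add_assoc (add a b) (cb_opp c)), (cb_add_assoc (cb_opp c) c),
    cb_add_opp_l, cb_add_0_l, <- !cb_add_assoc, (cb_add_comm (cb_opp d) e).
  reflexivity.
Qed.

Variables (q : nat -> X) (x : X).

Definition tail (i : nat) : X := vsub x (psum X q i).

Lemma tail_step i : q i = vsub (tail i) (tail (S i)).
Proof. symmetry. apply vsub_vsub_cancel. Qed.

Lemma abel_summation (g : nat -> R) m k :
  add (psum X (fun j => scal (g (m + j)%nat) (q (m + j)%nat)) k)
      (scal (g (m + k)%nat) (tail (m + k))) =
  add (scal (g m) (tail m))
      (psum X (fun j => scal (g (S (m + j)) - g (m + j)%nat) (tail (S (m + j)))) k).
Proof.
  induction k as [|k IH].
  - simpl. rewrite Nat.add_0_r, cb_add_0_l, cb_add_0. reflexivity.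
  - simpl psum. rewrite Nat.add_succ_r.
    symmetry in IH. apply vsub_eq in IH. rewrite <- IH, tail_step, cb_scal_vsub, cb_scal_minus.
    apply vsub_add_rearrange.
Qed.

Lemma norm_abel_sum_le (g : nat -> R) m k B :
  (forall j, (j <= k)%nat -> nrm (tail (m + j)) <= B) ->
  nrm (psum X (fun j => scal (g (m + j)%nat) (q (m + j)%nat)) k) <=
  B * (Rabs (g m) + Rabs (g (m + k)%nat) + variation g m k).
Proof.
  intro HB.
  assert (Hm : nrm (tail m) <= B) by (rewrite <- (Nat.add_0_r m); apply HB; lia).
  assert (Hmk : nrm (tail (m + k)) <= B) by (apply HB; lia).
  assert (B0 : 0 <= B) by (pose proof (norm_ge0 _ (tail m)); lra).
  assert (Hvar : nrm (psum X (fun j => scal (g (S (m + j)) - g (m + j)%nat)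
                                         (tail (S (m + j)))) k)
                 <= B * variation g m k).
  { eapply Rle_trans. apply norm_psum_le. unfold variation. rewrite <- rsum_scal.
    apply rsum_le. intros j Hj. rewrite norm_scal, Rmult_comm.
    apply Rmult_le_compat_r. apply Rabs_pos. rewrite <- Nat.add_succ_r. apply HB. lia. }
  pose proof (abel_summation g m k) as E. symmetry in E. apply vsub_eq in E. rewrite <- E.
  eapply Rle_trans. apply norm_vsub_le.
  eapply Rle_trans. apply Rplus_le_compat_r. apply cb_norm_triangle.
  rewrite !norm_scal.
  pose proof (Rmult_le_compat_l _ _ _ (Rabs_pos (g m)) Hm).
  pose proof (Rmult_le_compat_l _ _ _ (Rabs_pos (g (m + k)%nat)) Hmk).
  lra.
Qed.

Definition bounded_variation (g : nat -> R) (G V : R) : Prop :=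
  (forall i, Rabs (g i) <= G) /\ (forall m k, variation g m k <= V).

Hypothesis Hx : seq_conv X (psum X q) x.

Lemma weighted_series_conv (g : nat -> R) G V : bounded_variation g G V ->
  exists l, seq_conv X (psum X (fun i => scal (g i) (q i))) l.
Proof.
  intros [HG HV]. apply cauchy_seq_conv. intros e He.
  assert (G0 : 0 <= G) by (specialize (HG O); pose proof (Rabs_pos (g O)); lra).
  assert (V0 : 0 <= V) by (specialize (HV O O); unfold variation in HV; simpl in HV; lra).
  set (B := e / (2 * G + V + 1)).
  assert (B0 : 0 < B) by (apply Rdiv_lt_0_compat; lra).
  destruct (Hx B B0) as [M0 HM0]. exists M0. intros m M Hm HmM.
  replace M with (m + (M - m))%nat by lia. rewrite psum_split, cb_add_comm, add_vsubK.
  eapply Rle_lt_trans. apply norm_abel_sum_le with (B := B).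
  - intros j _. unfold tail. rewrite norm_vsubC. left. apply HM0. lia.
  - specialize (HV m (M - m)%nat). pose proof (HG m). pose proof (HG (m + (M - m))%nat).
    apply Rle_lt_trans with (B * (2 * G + V)). apply Rmult_le_compat_l; lra.
    unfold B. apply Rmult_lt_reg_r with (2 * G + V + 1). lra. field_simplify; lra.
Qed.

End AbelSummation.

Lemma norm_weighted_lim_le (X : CBanach) (q : nat -> X) (x l : X) (g : nat -> R) B V :
  (forall i, cb_norm (tail X q x i) <= B) ->
  seq_conv X (psum X (fun i => cb_scal (g i) (q i))) l ->
  (forall N, Rabs (g O) + Rabs (g N) + variation g O N <= V) ->
  cb_norm l <= B * V.
Proof.
  intros HB Hl HV. apply (norm_lim_le X _ _ _ Hl). intro N.
  assert (B0 : 0 <= B) by (pose proof (norm_ge0 _ (tail X q x O)); specialize (HB O); lra).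
  eapply Rle_trans. apply (norm_abel_sum_le X q x g O N B). intros; apply HB.
  apply Rmult_le_compat_l. exact B0. apply HV.
Qed.

Lemma Un_cv_const (c : R) : Un_cv (fun _ => c) c.
Proof. intros e He. exists O. intros. unfold Rdist. rewrite Rminus_diag, Rabs_R0. lra. Qed.

Lemma Rabs_le_cv_lim (u v : nat -> R) lu lv :
  (forall n, Rabs (u n) <= v n) -> Un_cv u lu -> Un_cv v lv -> Rabs lu <= lv.
Proof. intros H Hu Hv. eapply Rle_cv_lim; [exact H | apply cv_cvabs; exact Hu | exact Hv]. Qed.

Lemma exp_le_exp x y : x <= y -> exp x <= exp y.
Proof. intros [H | ->]. left; apply exp_increasing; exact H. lra. Qed.

Definition exp_trunc (y : R) (K : nat) : R := sum_f_R0 (fun k => / INR (fact k) * y ^ k) K.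

Definition exp_rem (s : R) (K : nat) : R := exp s - exp_trunc s K.

Lemma exp_trunc_cv y : Un_cv (exp_trunc y) (exp y).
Proof. unfold exp. destruct (exist_exp y) as [l Hl]. exact Hl. Qed.

Lemma exp_trunc_0 K : exp_trunc 0 K = 1.
Proof. unfold exp_trunc. induction K as [|K IH]; simpl. field. rewrite IH. simpl. ring. Qed.

Lemma exp_trunc_S y n :
  exp_trunc y (S n) = exp_trunc y n + / INR (fact (S n)) * y ^ S n.
Proof. reflexivity. Qed.

Lemma Rabs_pow_sub_le a b n : a <= b <= 0 -> Rabs (a ^ n - b ^ n) <= (- a) ^ n - (- b) ^ n.
Proof.
  intro H. replace a with (-1 * (- a)) at 1 by ring. replace b with (-1 * (- b)) at 1 by ring.
  rewrite !Rpow_mult_distr, <- Rmult_minus_distr_l, Rabs_mult, pow_1_abs, Rmult_1_l.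
  assert ((- b) ^ n <= (- a) ^ n) by (apply pow_incr; lra).
  rewrite Rabs_right; lra.
Qed.

(** Every term of the series of [exp a - exp b] is dominated by the
    corresponding term of [exp (-a) - exp (-b)]. *)
Lemma exp_trunc_increment_le a b K d : a <= b <= 0 ->
  Rabs ((exp_trunc a (d + K) - exp_trunc b (d + K)) - (exp_trunc a K - exp_trunc b K)) <=
  (exp_trunc (- a) (d + K) - exp_trunc (- b) (d + K)) - (exp_trunc (- a) K - exp_trunc (- b) K).
Proof.
  intro H. induction d as [|d IH]; simpl plus.
  - rewrite !Rminus_diag, Rabs_R0. lra.
  - rewrite !exp_trunc_S.
    set (c := / INR (fact (S (d + K)))).
    assert (Pc : 0 < c) by (apply Rinv_0_lt_compat, INR_fact_lt_0).
    pose proof (Rabs_pow_sub_le a b (S (d + K)) H) as Hpow.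
    eapply Rle_trans.
    { replace (_ - _ - _) with ((exp_trunc a (d + K) - exp_trunc b (d + K)
                                 - (exp_trunc a K - exp_trunc b K))
                                + c * (a ^ S (d + K) - b ^ S (d + K))) by ring.
      apply Rabs_triang. }
    rewrite Rabs_mult, (Rabs_right c) by lra.
    pose proof (Rmult_le_compat_l _ _ _ (Rlt_le _ _ Pc) Hpow). lra.
Qed.

Lemma exp_trunc_err_diff_le a b K : a <= b <= 0 ->
  Rabs ((exp_trunc a K - exp a) - (exp_trunc b K - exp b)) <= exp_rem (- a) K - exp_rem (- b) K.
Proof.
  intro H. unfold exp_rem.
  replace (exp_trunc a K - exp a - (exp_trunc b K - exp b))
    with (- ((exp a - exp b) - (exp_trunc a K - exp_trunc b K))) by ring.
  rewrite Rabs_Ropp.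
  replace (exp (- a) - exp_trunc (- a) K - (exp (- b) - exp_trunc (- b) K))
    with ((exp (- a) - exp (- b)) - (exp_trunc (- a) K - exp_trunc (- b) K)) by ring.
  apply Rabs_le_cv_lim with (1 := fun d => exp_trunc_increment_le a b K d H);
    apply CV_minus; try apply Un_cv_const; apply CV_minus; apply CV_shift', exp_trunc_cv.
Qed.

Lemma exp_rem_0 K : exp_rem 0 K = 0.
Proof. unfold exp_rem. rewrite exp_trunc_0, exp_0. ring. Qed.

Lemma exp_rem_le s s' K : 0 <= s <= s' -> exp_rem s K <= exp_rem s' K.
Proof.
  intro H. pose proof (exp_trunc_err_diff_le (- s') (- s) K ltac:(lra)) as E.
  rewrite !Ropp_involutive in E. pose proof (Rabs_pos
    (exp_trunc (- s') K - exp (- s') - (exp_trunc (- s) K - exp (- s)))). lra.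
Qed.

Lemma exp_rem_ge0 s K : 0 <= s -> 0 <= exp_rem s K.
Proof. intro. rewrite <- (exp_rem_0 K). apply exp_rem_le. lra. Qed.

Lemma exp_rem_cv0 s : Un_cv (exp_rem s) 0.
Proof.
  unfold exp_rem. replace 0 with (exp s - exp s) by ring.
  apply CV_minus. apply Un_cv_const. apply exp_trunc_cv.
Qed.

Lemma Rabs_exp_trunc_err_le a K : a <= 0 -> Rabs (exp_trunc a K - exp a) <= exp_rem (- a) K.
Proof.
  intro H. pose proof (exp_trunc_err_diff_le a 0 K ltac:(lra)) as E.
  rewrite exp_trunc_0, exp_0, Ropp_0, exp_rem_0 in E.
  replace (exp_trunc a K - exp a - (1 - 1)) with (exp_trunc a K - exp a) in E by ring. lra.
Qed.

Definition indicator_lt (N i : nat) : R := if (i <? N)%nat then 1 else 0.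

Lemma indicator_lt_1 N i : (i < N)%nat -> indicator_lt N i = 1.
Proof. intro H. unfold indicator_lt. apply Nat.ltb_lt in H. rewrite H. reflexivity. Qed.

Lemma indicator_lt_0 N i : (N <= i)%nat -> indicator_lt N i = 0.
Proof. intro H. unfold indicator_lt. apply Nat.ltb_ge in H. rewrite H. reflexivity. Qed.

Lemma psum_indicator_lt (X : CBanach) (q : nat -> X) N M :
  psum X (fun i => cb_scal (indicator_lt N i) (q i)) M = psum X q (Nat.min M N).
Proof.
  induction M as [|M IH]. reflexivity.
  destruct (le_lt_dec N M) as [L|L].
  - rewrite (Nat.min_r (S M) N) by lia. simpl psum. rewrite IH, (Nat.min_r M N) by lia.
    rewrite indicator_lt_0 by lia. rewrite cb_scal_0_l, cb_add_0. reflexivity.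
  - rewrite (Nat.min_l (S M) N) by lia. simpl psum. rewrite IH, (Nat.min_l M N) by lia.
    rewrite indicator_lt_1 by lia. rewrite cb_scal_1. reflexivity.
Qed.

Lemma variation_jump_le (e : nat -> R) N :
  (forall i, e i <= e (S i)) -> (forall i, 0 < e i <= 1) ->
  forall M, let f := fun i => e i - 1 + indicator_lt (S N) i in
  Rabs (f O) + Rabs (f M) + variation f O M <= 2 * e N + 2 * (1 - e (S N)).
Proof.
  intros Hinc He M f.
  assert (Hle : forall i j, (i <= j)%nat -> e i <= e j) by (apply nondecreasing_le; auto).
  assert (Flo : forall i, (i <= N)%nat -> f i = e i)
    by (intros i Hi; unfold f; rewrite indicator_lt_1 by lia; ring).
  assert (Fhi : forall i, (N < i)%nat -> f i = e i - 1)
    by (intros i Hi; unfold f; rewrite indicator_lt_0 by lia; ring).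
  assert (Vlo : forall k, (k <= N)%nat -> variation f O k = e k - e O).
  { intros k Hk. rewrite variation_nondecreasing_on; simpl.
    - rewrite !Flo by lia. reflexivity.
    - intros j Hj. rewrite !Flo by lia. apply Hinc. }
  rewrite Flo, Rabs_right by (lia || (pose proof (He O); lra)).
  destruct (le_lt_dec M N) as [L|L].
  - rewrite Flo, Rabs_right, Vlo by (lia || (pose proof (He M); lra)).
    pose proof (Hle M N L). pose proof (He (S N)). lra.
  - replace M with (S N + (M - S N))%nat by lia.
    rewrite Fhi, Rabs_left1 by (lia || (pose proof (He (S N + (M - S N))%nat); lra)).
    assert (Vjump : variation f O (S N) = (e N - e O) + (1 - e (S N) + e N)).
    { change (variation f O (S N)) with (variation f O N + Rabs (f (S N) - f N)).
      rewrite Vlo, Fhi, Flo, Rabs_left1 by (lia || (pose proof (He (S N)); pose proof (He N); lra)).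
      ring. }
    assert (Vhi : variation f (S N) (M - S N) = e (S N + (M - S N))%nat - e (S N)).
    { rewrite variation_nondecreasing_on.
      - rewrite !Fhi by lia. ring.
      - intros j Hj. rewrite !Fhi by lia. specialize (Hinc (S N + j)%nat). lra. }
    rewrite variation_split, Vjump, Nat.add_0_l, Vhi. lra.
Qed.

Section DiagonalSemigroup.
Variables (X : CBanach) (Xs : nat -> X -> Prop) (p : nat -> X -> X).
Notation scal := (@cb_scal X).
Notation nrm := (@cb_norm X).
Hypothesis Hsub : forall n, (1 <= n)%nat -> closed_subspace X (Xs n).
Hypothesis Hin : forall x n, (1 <= n)%nat -> Xs n (p n x).
Hypothesis Hser : forall x, series_conv X 1 (fun n => p n x) x.
Hypothesis Huniq : forall x (y : nat -> X), (forall n, (1 <= n)%nat -> Xs n (y n)) ->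
  series_conv X 1 y x -> forall n, (1 <= n)%nat -> y n = p n x.
Variables (a : nat -> R) (t : R).
Hypothesis Ha : forall n, (1 <= n)%nat -> 0 < a n.
Hypothesis Hmono : forall n, (1 <= n)%nat -> a n <= a (S n).
Hypothesis Ht : 0 < t.

(** Indices are shifted by one: [coord x i] is the component [p (i+1) x], and
    [eigval i] is the eigenvalue of [-t A^{-1}] on [X_(i+1)]. *)
Definition coord (x : X) (i : nat) : X := p (S i) x.
Definition eigval (i : nat) : R := - t / a (S i).
Definition neg_tAinv (y : X) : X := scal (- t) (Ainv a p y).

Lemma coord_expansion x : seq_conv X (psum X (coord x)) x.
Proof.
  apply seq_conv_ext with (fun N => vsum X (fun n => p n x) 1 N).
  intro; apply vsum1_psum. apply Hser.
Qed.

Lemma inv_a_pos i : 0 < / a (S i).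
Proof. apply Rinv_0_lt_compat, Ha; lia. Qed.

Lemma inv_a_nonincreasing i : / a (S (S i)) <= / a (S i).
Proof. apply Rinv_le_contravar. apply Ha; lia. apply Hmono; lia. Qed.

Lemma pow_inv_a_bounded_variation k :
  bounded_variation (fun i => (/ a (S i)) ^ k) ((/ a 1%nat) ^ k) ((/ a 1%nat) ^ k).
Proof.
  set (h := fun i => (/ a (S i)) ^ k).
  assert (Hdec : forall i, h (S i) <= h i).
  { intro i. apply pow_incr. pose proof (inv_a_nonincreasing i). pose proof (inv_a_pos (S i)).
    lra. }
  assert (Hpos : forall i, 0 <= h i) by (intro; apply pow_le; left; apply inv_a_pos).
  split.
  - intro i. rewrite Rabs_right by (apply Rle_ge, Hpos).
    apply (nonincreasing_le h Hdec O). lia.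
  - intros m n. rewrite variation_nonincreasing by exact Hdec.
    pose proof (Hpos (m + n)%nat). pose proof (nonincreasing_le h Hdec O m ltac:(lia)).
    unfold h in *. lra.
Qed.

Lemma iter_neg_tAinv_expansion x k :
  seq_conv X (psum X (fun i => scal ((- t) ^ k * (/ a (S i)) ^ k) (coord x i)))
    (Nat.iter k neg_tAinv x).
Proof.
  induction k as [|k IH].
  - eapply seq_conv_ext; [|apply coord_expansion]. intro n. apply eq_psum. intros i _.
    simpl. rewrite Rmult_1_r, cb_scal_1. reflexivity.
  - set (z := Nat.iter k neg_tAinv x). change (Nat.iter (S k) neg_tAinv x) with (neg_tAinv z).
    (* by uniqueness, the expansion of [z] found so far is its Schauder expansion *)
    assert (Hz : forall n, (1 <= n)%nat -> p n z = scal ((- t) ^ k * (/ a n) ^ k) (p n x)).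
    { intros n Hn. symmetry.
      apply (Huniq z (fun n => scal ((- t) ^ k * (/ a n) ^ k) (p n x))); auto.
      - intros m Hm. destruct (Hsub m Hm) as [_ [_ [Hscal _]]]. apply Hscal, Hin, Hm.
      - eapply seq_conv_ext; [|exact IH]. intro N. rewrite vsum1_psum. reflexivity. }
    destruct (weighted_series_conv X (coord x) x (coord_expansion x) _ _ _
                (pow_inv_a_bounded_variation (S k))) as [l Hl].
    assert (HA : Ainv a p z = scal ((- t) ^ k) l).
    { unfold Ainv, series_sum. apply vlim_eq.
      eapply seq_conv_ext; [|apply (seq_conv_scal X _ _ _ Hl)]. intro N.
      rewrite vsum1_psum, <- psum_scal. apply eq_psum. intros i _.
      rewrite Hz, !cb_scal_assoc by lia. f_equal. simpl. ring. }
    unfold neg_tAinv. rewrite HA, cb_scal_assoc.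
    eapply seq_conv_ext; [|apply (seq_conv_scal X _ _ _ Hl)]. intro N. cbv beta.
    rewrite <- psum_scal. apply eq_psum. intros i _.
    rewrite cb_scal_assoc. reflexivity.
Qed.

Lemma exp_partial_sum_expansion x K :
  seq_conv X (psum X (fun i => scal (exp_trunc (eigval i) K) (coord x i)))
    (psum X (fun k => scal (/ INR (fact k)) (Nat.iter k neg_tAinv x)) (S K)).
Proof.
  eapply seq_conv_ext; [|apply (seq_conv_psum X (fun k => psum X (fun i =>
    scal (/ INR (fact k) * ((- t) ^ k * (/ a (S i)) ^ k)) (coord x i))))].
  - intro N. cbv beta. rewrite exchange_psum. apply eq_psum. intros i _. f_equal.
    rewrite rsum_sum_f_R0. apply sum_eq. intros k _. unfold eigval, Rdiv.
    rewrite Rpow_mult_distr. ring.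
  - intro k. eapply seq_conv_ext;
      [|apply (seq_conv_scal X (/ INR (fact k)) _ _ (iter_neg_tAinv_expansion x k))].
    intro n. cbv beta. symmetry. apply psum_scal_mult.
Qed.

Lemma eigval_nondecreasing i : eigval i <= eigval (S i).
Proof.
  unfold eigval, Rdiv. pose proof (inv_a_nonincreasing i). apply Ropp_le_contravar in H.
  rewrite <- !Ropp_mult_distr_l. nra.
Qed.

Lemma eigval_le0 i : eigval i <= 0.
Proof. unfold eigval, Rdiv. pose proof (inv_a_pos i). nra. Qed.

Lemma exp_eigval_nondecreasing i : exp (eigval i) <= exp (eigval (S i)).
Proof. apply exp_le_exp, eigval_nondecreasing. Qed.

Lemma exp_eigval_in01 i : 0 < exp (eigval i) <= 1.
Proof. split. apply exp_pos. rewrite <- exp_0. apply exp_le_exp, eigval_le0. Qed.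

Lemma exp_eigval_bounded_variation : bounded_variation (fun i => exp (eigval i)) 1 1.
Proof.
  split.
  - intro i. pose proof (exp_eigval_in01 i). rewrite Rabs_right; lra.
  - intros m k. rewrite variation_nondecreasing_on
      by (intros; apply exp_eigval_nondecreasing).
    pose proof (exp_eigval_in01 m). pose proof (exp_eigval_in01 (m + k)). lra.
Qed.

Lemma exp_trunc_err_weight_le K N :
  let g := fun i => exp_trunc (eigval i) K - exp (eigval i) in
  Rabs (g O) + Rabs (g N) + variation g O N <= 3 * exp_rem (- eigval O) K.
Proof.
  intro g.
  assert (Hg : forall i, Rabs (g i) <= exp_rem (- eigval O) K).
  { intro i. eapply Rle_trans. apply Rabs_exp_trunc_err_le, eigval_le0.
    apply exp_rem_le. pose proof (eigval_le0 i).
    pose proof (nondecreasing_le eigval eigval_nondecreasing O i ltac:(lia)). lra. }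
  assert (Hvar : variation g O N <= exp_rem (- eigval O) K).
  { eapply Rle_trans.
    - apply rsum_le with (g := fun j => exp_rem (- eigval j) K - exp_rem (- eigval (S j)) K).
      intros j _. simpl. rewrite Rabs_minus_sym. apply exp_trunc_err_diff_le.
      split. apply eigval_nondecreasing. apply eigval_le0.
    - rewrite rsum_telescope. pose proof (eigval_le0 N).
      pose proof (exp_rem_ge0 (- eigval N) K). lra. }
  pose proof (Hg O). pose proof (Hg N). lra.
Qed.

Lemma semigroup_expansion x B : (forall i, nrm (tail X (coord x) x i) <= B) ->
  seq_conv X (psum X (fun i => scal (exp (eigval i)) (coord x i))) (semigroup_Ainv a p t x).
Proof.
  intro HB.
  destruct (weighted_series_conv X (coord x) x (coord_expansion x) _ _ _
              exp_eigval_bounded_variation) as [W HW].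
  replace (semigroup_Ainv a p t x) with W; [exact HW|]. symmetry.
  unfold semigroup_Ainv, opexp, series_sum. apply vlim_eq.
  apply seq_conv_of_norm_le_cv0 with (r := fun K => B * (3 * exp_rem (- eigval O) K)).
  - intro K. rewrite vsum0_psum.
    apply (norm_weighted_lim_le X (coord x) x _
             (fun i => exp_trunc (eigval i) K - exp (eigval i))).
    + exact HB.
    + eapply seq_conv_ext; [|apply (seq_conv_vsub X _ _ _ _
                                      (exp_partial_sum_expansion x K) HW)].
      intro N. symmetry. apply psum_scal_minus.
    + apply exp_trunc_err_weight_le.
  - replace 0 with (B * (3 * 0)) by ring.
    apply CV_mult. apply Un_cv_const. apply CV_mult. apply Un_cv_const. apply exp_rem_cv0.
Qed.

Lemma semigroup_sub_Qn_norm_le x B N : (forall i, nrm (tail X (coord x) x i) <= B) ->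
  nrm (vsub (semigroup_Ainv a p t x) (Qn p (S N) x)) <=
  B * (2 * exp (eigval N) + 2 * (1 - exp (eigval (S N)))).
Proof.
  intro HB.
  set (f := fun i => exp (eigval i) - 1 + indicator_lt (S N) i).
  assert (Hf : seq_conv X (psum X (fun i => scal (f i) (coord x i)))
                 (vsub (semigroup_Ainv a p t x) (Qn p (S N) x))).
  { unfold Qn, Pn. rewrite vsum1_psum. fold (coord x). rewrite vsub_vsub.
    assert (Hind : seq_conv X (psum X (fun i => scal (indicator_lt (S N) i) (coord x i)))
                     (psum X (coord x) (S N))).
    { apply seq_conv_eventually_ext with (fun _ => psum X (coord x) (S N)).
      - exists (S N). intros n Hn. rewrite psum_indicator_lt, Nat.min_r by lia. reflexivity.
      - apply seq_conv_const. }
    assert (H1 : seq_conv X (psum X (fun i => scal 1 (coord x i))) x).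
    { eapply seq_conv_ext; [|apply coord_expansion]. intro n. apply eq_psum.
      intros; symmetry; apply cb_scal_1. }
    eapply seq_conv_ext; [|exact (seq_conv_add X _ _ _ _
      (seq_conv_vsub X _ _ _ _ (semigroup_expansion x B HB) H1) Hind)].
    intro M. unfold f. rewrite psum_scal_plus, psum_scal_minus. reflexivity. }
  apply (norm_weighted_lim_le X (coord x) x _ f _ _ HB Hf).
  apply variation_jump_le. apply exp_eigval_nondecreasing. apply exp_eigval_in01.
Qed.

End DiagonalSemigroup.

Lemma Rsup_is_lub (S : R -> Prop) b :
  (forall y, S y -> y <= b) -> (exists y, S y) -> is_lub S (Rsup S).
Proof.
  intros Hb Hne. unfold Rsup. apply epsilon_spec.
  destruct (completeness S) as [m Hm]. exists b. exact Hb. exact Hne. exists m; exact Hm.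
Qed.

Lemma opnorm_spec (X : CBanach) (T : X -> X) b :
  (forall x, cb_norm x <= 1 -> cb_norm (T x) <= b) ->
  0 <= opnorm T <= b /\ (forall x, cb_norm x <= 1 -> cb_norm (T x) <= opnorm T).
Proof.
  intro H.
  assert (H0 : cb_norm (@cb_zero X) <= 1) by (rewrite norm_0; lra).
  destruct (Rsup_is_lub (fun y => exists x, cb_norm x <= 1 /\ y = cb_norm (T x)) b)
    as [Hub Hleast].
  - intros y [x [Hx ->]]. auto.
  - exists (cb_norm (T cb_zero)), cb_zero. auto.
  - fold (opnorm T) in Hub, Hleast. split; [split|].
    + eapply Rle_trans. apply (norm_ge0 _ (T cb_zero)). apply Hub. exists cb_zero. auto.
    + apply Hleast. intros y [x [Hx ->]]. auto.
    + intros x Hx. apply Hub. exists x. auto.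
Qed.

Section ProjectionBound.
Variables (X : CBanach) (p : nat -> X -> X).
Hypothesis HP : exists M, forall N x, (1 <= N)%nat -> cb_norm (Pn p N x) <= M * cb_norm x.

Lemma norm_Pn_le_uniform :
  exists b, forall N x, (1 <= N)%nat -> cb_norm x <= 1 -> cb_norm (Pn p N x) <= b.
Proof.
  destruct HP as [M HM]. exists (Rabs M). intros N x HN Hx.
  eapply Rle_trans. apply HM; auto.
  pose proof (norm_ge0 _ x). pose proof (Rle_abs M). pose proof (Rabs_pos M). nra.
Qed.

Lemma opnorm_Pn_le_Kconst N : (1 <= N)%nat -> opnorm (Pn p N) <= Kconst p.
Proof.
  intro HN. destruct norm_Pn_le_uniform as [b Hb].
  destruct (Rsup_is_lub (fun y => exists N, (1 <= N)%nat /\ y = opnorm (Pn p N)) b)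
    as [Hub _].
  - intros y [N' [HN' ->]]. apply (opnorm_spec X _ _ (fun x => Hb N' x HN')).
  - exists (opnorm (Pn p 1)), 1%nat. auto.
  - apply Hub. exists N. auto.
Qed.

Lemma norm_Pn_le_Kconst N x : cb_norm x <= 1 -> cb_norm (Pn p N x) <= Kconst p.
Proof.
  intro Hx. destruct norm_Pn_le_uniform as [b Hb].
  assert (HPN : forall N, (1 <= N)%nat -> cb_norm (Pn p N x) <= Kconst p).
  { intros N' HN'. eapply Rle_trans; [|apply (opnorm_Pn_le_Kconst N' HN')].
    apply (opnorm_spec X _ _ (fun x => Hb N' x HN')). exact Hx. }
  destruct N as [|N].
  - unfold Pn. simpl. rewrite norm_0.
    pose proof (norm_ge0 _ (Pn p 1 x)). pose proof (HPN 1%nat (le_n _)). lra.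
  - apply HPN. lia.
Qed.

Lemma Kconst_ge0 : 0 <= Kconst p.
Proof.
  assert (H0 : cb_norm (@cb_zero X) <= 1) by (rewrite norm_0; lra).
  pose proof (norm_Pn_le_Kconst O cb_zero H0) as H. unfold Pn in H. simpl in H.
  rewrite norm_0 in H. exact H.
Qed.

End ProjectionBound.
Theorem opnorm_semigroup_sub_Qn_le (X : CBanach) (Xs : nat -> X -> Prop) (p : nat -> X -> X) :
  schauder_decomposition Xs p ->
  forall a : nat -> R,
    (forall n, (1 <= n)%nat -> 0 < a n) ->
    (forall n, (1 <= n)%nat -> a n <= a (S n)) ->
    forall (t : R) (N : nat), 0 < t -> (1 <= N)%nat ->
      0 <= opnorm (fun x => vsub (semigroup_Ainv a p t x) (Qn p N x)) <=
      2 * (1 + Kconst p) * (exp (- t / a N) + 1 - exp (- t / a (S N))).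
Proof.
  intros [Hsub [Hin [Hser [Huniq HP]]]] a Ha Hmono t N Ht HN.
  destruct N as [|N]; [lia|].
  apply opnorm_spec. intros x Hx.
  eapply Rle_trans.
  - apply (semigroup_sub_Qn_norm_le X Xs p Hsub Hin Hser Huniq a t Ha Hmono Ht x (1 + Kconst p)).
    intro i. unfold tail, coord. rewrite <- (vsum1_psum X (fun n => p n x)).
    eapply Rle_trans. apply norm_vsub_le.
    pose proof (norm_Pn_le_Kconst X p HP i x Hx). unfold Pn in *. lra.
  - unfold eigval. right. ring.
Qed.

Lemma exp_opp_INR_le n : exp (- INR n) <= (/ 2) ^ n.
Proof.
  rewrite exp_Ropp, pow_inv. apply Rinv_le_contravar. apply pow_lt; lra.
  induction n as [|n IH].
  - simpl. rewrite exp_0. lra.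
  - rewrite S_INR, exp_plus. simpl. pose proof (exp_ineq1_le 1).
    pose proof (pow_lt 2 n ltac:(lra)). nra.
Qed.

Lemma fact_cube_pos n : 0 < INR (fact n) ^ 3.
Proof. apply pow_lt, INR_fact_lt_0. Qed.

Lemma fact_cube_le_S n : INR (fact n) ^ 3 <= INR (fact (S n)) ^ 3.
Proof.
  apply pow_incr. split. left; apply INR_fact_lt_0.
  rewrite fact_simpl, mult_INR, S_INR. pose proof (INR_fact_lt_0 n). pose proof (pos_INR n).
  nra.
Qed.

(** With [a_n = (n!)^3] and [t_n = n (n!)^3]: [t_n / a_n = n] and
    [t_n / a_(n+1) = n / (n+1)^3 <= 1 / (n (n+1))]. *)
Lemma fact_cube_bound_le n : (1 <= n)%nat ->
  exp (- (INR n * INR (fact n) ^ 3) / INR (fact n) ^ 3) + 1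
  - exp (- (INR n * INR (fact n) ^ 3) / INR (fact (S n)) ^ 3)
  <= (/ 2) ^ n + / (INR n * INR (S n)).
Proof.
  intro Hn. rewrite (S_INR n), (fact_simpl n), mult_INR, S_INR.
  set (u := INR n). set (f := INR (fact n)).
  assert (Hf : 0 < f) by apply INR_fact_lt_0.
  assert (Hu : 1 <= u) by (apply (le_INR 1); exact Hn).
  replace (- (u * f ^ 3) / f ^ 3) with (- u) by (field; apply Rgt_not_eq; lra).
  replace (- (u * f ^ 3) / ((u + 1) * f) ^ 3) with (- (u / (u + 1) ^ 3))
    by (field; split; apply Rgt_not_eq; lra).
  assert (Hexp : 1 - exp (- (u / (u + 1) ^ 3)) <= u / (u + 1) ^ 3)
    by (pose proof (exp_ineq1_le (- (u / (u + 1) ^ 3))); lra).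
  assert (Hratio : u / (u + 1) ^ 3 <= / (u * (u + 1))).
  { apply Rmult_le_reg_r with ((u + 1) ^ 3 * (u * (u + 1))).
    apply Rmult_lt_0_compat; [apply pow_lt|]; nra.
    field_simplify; [|nra|nra]. simpl. nra. }
  pose proof (exp_opp_INR_le n) as Hhalf. fold u in Hhalf. lra.
Qed.

Lemma sum_half_pow_inv_consec_le M :
  sum_f_R0 (fun k => (/ 2) ^ S k + / (INR (S k) * INR (S (S k)))) M <= 2.
Proof.
  assert (E : sum_f_R0 (fun k => (/ 2) ^ S k + / (INR (S k) * INR (S (S k)))) M =
              (1 - (/ 2) ^ S M) + (1 - / INR (S (S M)))).
  { induction M as [|M IH].
    - simpl. field.
    - rewrite tech5, IH, !(S_INR (S (S M))), !(S_INR (S M)), !(S_INR M). simpl pow.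
      field. pose proof (pos_INR M). split; apply Rgt_not_eq; lra. }
  rewrite E. pose proof (pow_lt (/ 2) (S M) ltac:(lra)).
  pose proof (Rinv_0_lt_compat (INR (S (S M))) (lt_0_INR (S (S M)) ltac:(lia))). lra.
Qed.

Lemma sum_f_R0_cv_of_le (u v : nat -> R) B :
  (forall k, 0 <= u k <= v k) -> (forall M, sum_f_R0 v M <= B) ->
  exists l, Un_cv (fun M => sum_f_R0 u M) l.
Proof.
  intros Huv Hv. destruct (growing_cv (fun M => sum_f_R0 u M)) as [l Hl].
  - intro n. simpl. pose proof (Huv (S n)). lra.
  - exists B. intros y [n ->]. eapply Rle_trans; [|apply (Hv n)].
    apply sum_Rle. intros. apply Huv.
  - exists l. exact Hl.
Qed.

Theorem mainTheorem8 :
  forall (X : CBanach) (Xs : nat -> X -> Prop) (p : nat -> X -> X),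
    schauder_decomposition Xs p ->
    (forall a : nat -> R,
        (forall n, (1 <= n)%nat -> 0 < a n) ->
        (forall n, (1 <= n)%nat -> a n <= a (S n)) ->
        (forall M : R, exists n0, forall n, (n0 <= n)%nat -> M < a n) ->
        forall (t : R) (N : nat), 0 < t -> (1 <= N)%nat ->
          opnorm (fun x => vsub (semigroup_Ainv a p t x) (Qn p N x))
            <= 2 * (1 + Kconst p) * (exp (- t / a N) + 1 - exp (- t / a (S N))))
    /\
    (let a := fun n : nat => INR (fact n) ^ 3 in
     let tN := fun N : nat => INR N * INR (fact N) ^ 3 in
     exists l : R,
       Un_cv (fun M => sum_f_R0
                (fun k => opnorm (fun x => vsub (semigroup_Ainv a p (tN (S k)) x)
                                                (Qn p (S k) x))) M) l).
Proof.
  intros X Xs p HS. split.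
  - intros a Ha Hmono _ t N Ht HN.
    apply (opnorm_semigroup_sub_Qn_le X Xs p HS a Ha Hmono t N Ht HN).
  - intros a tN. set (C := 2 * (1 + Kconst p)).
    assert (HC : 0 <= C).
    { destruct HS as [_ [_ [_ [_ HP]]]]. pose proof (Kconst_ge0 X p HP). unfold C. lra. }
    apply sum_f_R0_cv_of_le with
      (v := fun k => C * ((/ 2) ^ S k + / (INR (S k) * INR (S (S k))))) (B := C * 2).
    + intro k. assert (Ht : 0 < tN (S k)) by (apply Rmult_lt_0_compat;
        [apply lt_0_INR; lia | apply fact_cube_pos]).
      pose proof (opnorm_semigroup_sub_Qn_le X Xs p HS a (fun n _ => fact_cube_pos n)
                    (fun n _ => fact_cube_le_S n) (tN (S k)) (S k) Ht ltac:(lia)) as Hk.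
      split. apply Hk. eapply Rle_trans. apply Hk.
      apply Rmult_le_compat_l. exact HC. apply fact_cube_bound_le; lia.
    + intro M. rewrite <- (sum_eq (fun k => ((/ 2) ^ S k + / (INR (S k) * INR (S (S k)))) * C))
        by (intros; apply Rmult_comm).
      rewrite <- scal_sum. apply Rmult_le_compat_l. exact HC. apply sum_half_pow_inv_consec_le.
Qed.
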